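(* Assume (F), fix $\alpha\in\,]0,1[$, and let $0\le u^-<u^+\le V$ with $\hat\rho_{u^+}>\check\rho_{u^-}$. Then $\check\rho_{u^+}<\check\rho_{u^-}<\hat\rho_{u^+}<\hat\rho_{u^-}$ and $$u^+-u^-\ \ge\ \frac{\beta}{2}\,\big(\hat\rho_{u^-}-\hat\rho_{u^+}\big).$$
   Context: Hypothesis (F): $R>0$; $f\in C^2([0,R];[0,+\infty))$ with $f(\rho)=\rho v(\rho)$, $v\in C^2([0,R];[0,+\infty))$; $f(0)=f(R)=0$; there are $B\ge\beta>0$ with $-B\le f''\le-\beta$ on $[0,R]$; $v'(\rho)<0$ for $\rho\in\,]0,R[$. Let $V:=\max_{[0,R]}v=v(0)$. Define $f_\alpha(\rho):=\alpha f(\rho/\alpha)$ for $\rho\in[0,\alpha R]$. For $u\in[0,V]$: $\tilde\rho_u$ is the unique solution of $f_\alpha'(\rho)=u$; $\varphi_u(\rho):=f_\alpha(\tilde\rho_u)+u(\rho-\tilde\rho_u)$ for $\rho\in[0,R]$; $\mathcal I_u:=\{\rho\in[0,R]: f(\rho)=\varphi_u(\rho)\}$, $\check\rho_u:=\min\mathcal I_u$, $\hat\rho_u:=\max\mathcal I_u$. *)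

From Stdlib Require Import Reals.
Open Scope R_scope.

(* Functions are given on all of R; f1, f2 (resp. v1, v2)
   are the first and second derivatives of f (resp. v), required to exist
   (as two-sided derivatives of the given representatives) at every point of
   [0, L], with f2, v2 continuous there.  L plays the role of R in the paper. *)
Definition hypF (L B beta : R) (f f1 f2 v v1 v2 : R -> R) : Prop :=
  0 < L /\
  (forall x, 0 <= x <= L -> derivable_pt_lim f x (f1 x)) /\
  (forall x, 0 <= x <= L -> derivable_pt_lim f1 x (f2 x)) /\
  (forall x, 0 <= x <= L -> continuity_pt f2 x) /\
  (forall x, 0 <= x <= L -> derivable_pt_lim v x (v1 x)) /\
  (forall x, 0 <= x <= L -> derivable_pt_lim v1 x (v2 x)) /\
  (forall x, 0 <= x <= L -> continuity_pt v2 x) /\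
  (forall x, 0 <= x <= L -> 0 <= f x) /\
  (forall x, 0 <= x <= L -> 0 <= v x) /\
  (forall x, 0 <= x <= L -> f x = x * v x) /\
  f 0 = 0 /\ f L = 0 /\
  0 < beta <= B /\
  (forall x, 0 <= x <= L -> - B <= f2 x <= - beta) /\
  (forall x, 0 < x < L -> v1 x < 0).

Definition is_max_on (L : R) (v : R -> R) (V : R) : Prop :=
  (exists x, 0 <= x <= L /\ v x = V) /\ (forall x, 0 <= x <= L -> v x <= V).

Definition falpha (alpha : R) (f : R -> R) (rho : R) : R := alpha * f (rho / alpha).

Definition is_rtilde (L alpha : R) (f : R -> R) (u rt : R) : Prop :=
  0 <= rt <= alpha * L /\ derivable_pt_lim (falpha alpha f) rt u.

Definition phi (alpha : R) (f : R -> R) (u rt rho : R) : R :=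
  falpha alpha f rt + u * (rho - rt).

Definition in_I (L alpha : R) (f : R -> R) (u rt rho : R) : Prop :=
  0 <= rho <= L /\ f rho = phi alpha f u rt rho.

Definition is_min_I (L alpha : R) (f : R -> R) (u rt m : R) : Prop :=
  in_I L alpha f u rt m /\ (forall r, in_I L alpha f u rt r -> m <= r).

Definition is_max_I (L alpha : R) (f : R -> R) (u rt m : R) : Prop :=
  in_I L alpha f u rt m /\ (forall r, in_I L alpha f u rt r -> r <= m).

(* Write [u = f'(x)], so that [phi_u] is tangent to [f_alpha] at [alpha x].  The gap
   [phi_u - f] is nonnegative at [0] and [R] but negative at [alpha x] by strong
   concavity, so [check rho_u] and [hat rho_u] bracket every point where it is
   negative.  For [u- < u+] the difference of the two gaps is affine with slope
   [u+ - u-]; it is nonpositive at [alpha x+] and nonnegative at [alpha x-], because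
   at a tangency point no other line [phi_u] lies closer to [f], and this forces the
   four zeros to interlace.  Finally [phi_{u+}] is a chord of [f] through
   [check rho_{u+} < hat rho_{u+}], so at [hat rho_{u-}] it lies above [f] by at least
   [beta/2 (hat rho_{u-} - check rho_{u+}) (hat rho_{u-} - hat rho_{u+})]; reading the
   affine difference between [check rho_{u+}] and [hat rho_{u-}] gives the bound. *)

From Stdlib Require Import Reals Lra Psatz.
Open Scope R_scope.

Lemma derivable_pt_lim_eq (g : R -> R) x l l' :
  derivable_pt_lim g x l -> l = l' -> derivable_pt_lim g x l'.
Proof. now intros H <-. Qed.

Section StrongConcavity.

Variables (L beta : R) (f f1 f2 : R -> R).
Hypothesis f_der : forall x, 0 <= x <= L -> derivable_pt_lim f x (f1 x).
Hypothesis f1_der : forall x, 0 <= x <= L -> derivable_pt_lim f1 x (f2 x).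
Hypothesis f2_le : forall x, 0 <= x <= L -> f2 x <= - beta.

Lemma f1_strongly_decreasing a b : 0 <= a -> a < b -> b <= L -> f1 b - f1 a <= - beta * (b - a).
Proof.
  intros Ha Hab Hb.
  destruct (MVT_cor2 f1 f2 a b Hab) as [c [-> Hc]]; [intros; apply f1_der; lra|].
  assert (f2 c <= - beta) by (apply f2_le; lra).
  nra.
Qed.

Lemma strongly_concave_taylor x y : 0 <= x <= L -> 0 <= y <= L ->
  f y <= f x + f1 x * (y - x) - beta / 2 * (y - x) ^ 2.
Proof.
  intros Hx Hy.
  set (h t := f t - f1 x * (t - x) + beta / 2 * ((t - x) * (t - x))).
  set (dh t := f1 t - f1 x + beta * (t - x)).
  assert (h_der : forall t, 0 <= t <= L -> derivable_pt_lim h t (dh t)).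
  { intros t Ht.
    change h with (f - fct_cte (f1 x) * (id - fct_cte x)
                   + fct_cte (beta / 2) * ((id - fct_cte x) * (id - fct_cte x)))%F.
    eapply derivable_pt_lim_eq.
    - repeat first [ apply derivable_pt_lim_minus | apply derivable_pt_lim_plus
                   | apply derivable_pt_lim_mult | apply derivable_pt_lim_const
                   | apply derivable_pt_lim_id | apply f_der; lra ].
    - unfold dh, fct_cte, id, mult_fct, minus_fct; simpl; field. }
  (* [dh] has the sign of [x - t], so [h] peaks at [x] *)
  assert (h y <= h x); [|unfold h in *; lra].
  destruct (Rtotal_order x y) as [Hxy|[<-|Hyx]]; [| lra |].
  - destruct (MVT_cor2 h dh x y Hxy) as [c [Hc Hcxy]]; [intros; apply h_der; lra|].
    assert (f1 c - f1 x <= - beta * (c - x)) by (apply f1_strongly_decreasing; lra).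
    unfold dh in Hc; nra.
  - destruct (MVT_cor2 h dh y x Hyx) as [c [Hc Hcxy]]; [intros; apply h_der; lra|].
    assert (f1 x - f1 c <= - beta * (x - c)) by (apply f1_strongly_decreasing; lra).
    unfold dh in Hc; nra.
Qed.

Lemma strongly_concave_combination t x y : 0 <= t <= 1 -> 0 <= x <= L -> 0 <= y <= L ->
  t * f x + (1 - t) * f y + beta / 2 * (t * (1 - t)) * (x - y) ^ 2 <= f (t * x + (1 - t) * y).
Proof.
  intros Ht Hx Hy.
  set (z := t * x + (1 - t) * y).
  assert (Hz : 0 <= z <= L) by (unfold z; nra).
  pose proof (strongly_concave_taylor z x Hz Hx) as Tx.
  pose proof (strongly_concave_taylor z y Hz Hy) as Ty.
  apply Rmult_le_compat_l with (r := t) in Tx; [|lra].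
  apply Rmult_le_compat_l with (r := 1 - t) in Ty; [|lra].
  assert (t * (f z + f1 z * (x - z) - beta / 2 * (x - z) ^ 2)
          + (1 - t) * (f z + f1 z * (y - z) - beta / 2 * (y - z) ^ 2)
          = f z - beta / 2 * (t * (1 - t)) * (x - y) ^ 2) by (unfold z; ring).
  lra.
Qed.

Lemma secant_excess a b c u : 0 <= a -> a < b -> b < c -> c <= L ->
  u * (b - a) = f b - f a -> beta / 2 * (c - a) * (c - b) <= u * (c - b) - (f c - f b).
Proof.
  intros Ha Hab Hbc Hc Hu.
  pose proof (strongly_concave_taylor b a ltac:(lra) ltac:(lra)) as Ta.
  pose proof (strongly_concave_taylor b c ltac:(lra) ltac:(lra)) as Tc.
  assert (Hslope : beta / 2 * (b - a) <= u - f1 b).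
  { apply (Rmult_le_reg_r (b - a)); nra. }
  nra.
Qed.

Hypothesis beta_pos : 0 < beta.

Lemma f1_lt_rev x y : 0 <= x <= L -> 0 <= y <= L -> f1 x < f1 y -> y < x.
Proof.
  intros Hx Hy Hf. destruct (Rlt_or_le y x) as [|Hxy]; [assumption | exfalso].
  destruct Hxy as [Hxy | ->]; [|lra].
  pose proof (f1_strongly_decreasing x y ltac:(lra) Hxy ltac:(lra)). nra.
Qed.

End StrongConcavity.

Definition first_zero (L : R) (g : R -> R) (r : R) : Prop :=
  (0 <= r <= L /\ g r = 0) /\ (forall z, 0 <= z <= L -> g z = 0 -> r <= z).

Definition last_zero (L : R) (g : R -> R) (r : R) : Prop :=
  (0 <= r <= L /\ g r = 0) /\ (forall z, 0 <= z <= L -> g z = 0 -> z <= r).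

Section ZerosOfContinuous.

Variables (L : R) (g : R -> R).
Hypothesis g_cont : forall r, 0 <= r <= L -> continuity_pt g r.

Lemma first_zero_lt rc y : 0 <= g 0 -> first_zero L g rc -> 0 <= y <= L -> g y < 0 -> rc < y.
Proof.
  intros G0 [_ Hmin] Hy Gy.
  assert (Hy0 : 0 < y) by (destruct (Req_dec y 0) as [->|]; lra).
  assert (exists z, 0 <= z < y /\ g z = 0) as (z & Hz & Gz).
  { destruct (Req_dec (g 0) 0) as [E|E]; [exists 0; split; [lra | exact E]|].
    destruct (Ranalysis5.IVT_interv (fun r => - g r) 0 y) as (z & Hz & Gz); try lra.
    - intros a Ha; apply continuity_pt_opp, g_cont; lra.
    - exists z; split; [destruct (Req_dec z y) as [->|]|]; lra. }
  pose proof (Hmin z ltac:(lra) Gz); lra.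
Qed.

Lemma last_zero_gt rh y : 0 <= g L -> last_zero L g rh -> 0 <= y <= L -> g y < 0 -> y < rh.
Proof.
  intros GL [_ Hmax] Hy Gy.
  assert (HyL : y < L) by (destruct (Req_dec y L) as [->|]; lra).
  assert (exists z, y < z <= L /\ g z = 0) as (z & Hz & Gz).
  { destruct (Req_dec (g L) 0) as [E|E]; [exists L; split; [lra | exact E]|].
    destruct (Ranalysis5.IVT_interv g y L) as (z & Hz & Gz); try lra.
    - intros a Ha; apply g_cont; lra.
    - exists z; split; [destruct (Req_dec z y) as [->|]|]; lra. }
  pose proof (Hmax z ltac:(lra) Gz); lra.
Qed.

End ZerosOfContinuous.

Section TangentGap.

Variables (L beta alpha : R) (f f1 f2 : R -> R).
Hypothesis f_der : forall x, 0 <= x <= L -> derivable_pt_lim f x (f1 x).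
Hypothesis f1_der : forall x, 0 <= x <= L -> derivable_pt_lim f1 x (f2 x).
Hypothesis f2_le : forall x, 0 <= x <= L -> f2 x <= - beta.
Hypothesis beta_pos : 0 < beta.
Hypothesis alpha_range : 0 < alpha < 1.
Hypothesis f_nonneg : forall x, 0 <= x <= L -> 0 <= f x.
Hypothesis f_0 : f 0 = 0.
Hypothesis f_L : f L = 0.

(* [tangent_gap x] is [phi_u - f] for [u = f1 x], i.e. for [tilde rho_u = alpha * x]. *)
Definition tangent_gap (x r : R) : R := alpha * f x + f1 x * (r - alpha * x) - f r.

Let taylor := strongly_concave_taylor L beta f f1 f2 f_der f1_der f2_le.

Lemma tangent_gap_continuous x r : 0 <= r <= L -> continuity_pt (tangent_gap x) r.
Proof.
  intro Hr.
  change (tangent_gap x)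
    with ((fct_cte (alpha * f x) + fct_cte (f1 x) * (id - fct_cte (alpha * x))) - f)%F.
  apply derivable_continuous_pt; eexists.
  repeat first [ apply derivable_pt_lim_minus | apply derivable_pt_lim_plus
               | apply derivable_pt_lim_mult | apply derivable_pt_lim_const
               | apply derivable_pt_lim_id | apply f_der; lra ].
Qed.

Lemma tangent_gap_0_ge0 x : 0 <= x <= L -> 0 <= tangent_gap x 0.
Proof.
  intro Hx. pose proof (taylor x 0 Hx ltac:(lra)).
  assert (0 <= beta / 2 * (0 - x) ^ 2) by (apply Rmult_le_pos; [lra | apply pow2_ge_0]).
  unfold tangent_gap; rewrite f_0 in *; nra.
Qed.

Lemma tangent_gap_L_ge0 x : 0 <= x <= L -> 0 <= f1 x -> 0 <= tangent_gap x L.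
Proof.
  intros Hx Hu.
  assert (0 <= alpha * f x) by (apply Rmult_le_pos; [lra | apply f_nonneg, Hx]).
  assert (0 <= f1 x * (L - alpha * x)) by (apply Rmult_le_pos; nra).
  unfold tangent_gap; rewrite f_L; lra.
Qed.

Lemma tangent_gap_tangency_lt0 x : 0 < x <= L -> tangent_gap x (alpha * x) < 0.
Proof.
  intro Hx.
  pose proof (strongly_concave_combination L beta f f1 f2 f_der f1_der f2_le alpha x 0
                ltac:(lra) ltac:(lra) ltac:(lra)) as Hc.
  rewrite f_0, !Rmult_0_r, !Rplus_0_r in Hc.
  assert (0 < beta / 2 * (alpha * (1 - alpha)) * (x - 0) ^ 2).
  { apply Rmult_lt_0_compat; [apply Rmult_lt_0_compat; [lra | nra] | apply pow_lt; lra]. }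
  unfold tangent_gap; rewrite Rminus_diag, Rmult_0_r; lra.
Qed.

Lemma tangent_gap_origin_pos r : 0 < r <= L -> 0 < tangent_gap 0 r.
Proof.
  intro Hr. pose proof (taylor 0 r ltac:(lra) ltac:(lra)).
  assert (0 < beta / 2 * (r - 0) ^ 2) by (apply Rmult_lt_0_compat; [lra | apply pow_lt; lra]).
  unfold tangent_gap; rewrite f_0 in *; lra.
Qed.

Lemma tangent_gap_sub x y a b :
  (tangent_gap x a - tangent_gap y a) - (tangent_gap x b - tangent_gap y b)
  = (f1 x - f1 y) * (a - b).
Proof. unfold tangent_gap; ring. Qed.

Lemma tangent_gap_min_at_tangency x y : 0 <= x <= L -> 0 <= y <= L ->
  tangent_gap x (alpha * x) <= tangent_gap y (alpha * x).
Proof.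
  intros Hx Hy. pose proof (taylor y x Hy Hx) as T.
  assert (0 <= beta / 2 * (x - y) ^ 2) by (apply Rmult_le_pos; [lra | apply pow2_ge_0]).
  apply Rmult_le_compat_l with (r := alpha) in T; [|lra].
  assert (f1 y * (alpha * x - alpha * y) = alpha * (f1 y * (x - y))) by ring.
  unfold tangent_gap; rewrite Rminus_diag, Rmult_0_r; nra.
Qed.

Lemma tangent_gap_neg_between x rc rh y : 0 < x <= L -> 0 <= f1 x ->
  first_zero L (tangent_gap x) rc -> last_zero L (tangent_gap x) rh ->
  0 <= y <= L -> tangent_gap x y < 0 -> rc < y < rh.
Proof.
  intros Hx Hu Hc Hh Hy Gy.
  split.
  - exact (first_zero_lt L _ (tangent_gap_continuous x) rc y
             (tangent_gap_0_ge0 x ltac:(lra)) Hc Hy Gy).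
  - exact (last_zero_gt L _ (tangent_gap_continuous x) rh y
             (tangent_gap_L_ge0 x ltac:(lra) Hu) Hh Hy Gy).
Qed.

Section TwoTangents.

Variables (xm xp rcm rhm rcp rhp : R).
Hypothesis xm_range : 0 <= xm <= L.
Hypothesis xp_range : 0 <= xp <= L.
Hypothesis slope_m_nonneg : 0 <= f1 xm.
Hypothesis slopes_lt : f1 xm < f1 xp.
Hypothesis rcm_first : first_zero L (tangent_gap xm) rcm.
Hypothesis rhm_last : last_zero L (tangent_gap xm) rhm.
Hypothesis rcp_first : first_zero L (tangent_gap xp) rcp.
Hypothesis rhp_last : last_zero L (tangent_gap xp) rhp.
Hypothesis zeros_overlap : rcm < rhp.

Lemma tangency_points_pos : 0 < xp < xm.
Proof.
  destruct rcm_first as [[Hrcm _] _]; destruct rhp_last as [[Hrhp Ghp] _].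
  assert (Hxp : 0 < xp).
  { destruct (Req_dec xp 0) as [E|]; [exfalso | lra].
    rewrite E in Ghp. pose proof (tangent_gap_origin_pos rhp ltac:(lra)). lra. }
  split; [exact Hxp|]. eapply f1_lt_rev; eauto.
Qed.

Lemma tangency_brackets : (rcm < alpha * xm < rhm) /\ (rcp < alpha * xp < rhp).
Proof.
  destruct tangency_points_pos as [Hxp Hxm].
  split; [apply (tangent_gap_neg_between xm) | apply (tangent_gap_neg_between xp)];
    auto; solve [lra | nra | apply tangent_gap_tangency_lt0; lra].
Qed.

Lemma rcp_lt_rcm : rcp < rcm.
Proof.
  destruct (Rlt_or_le rcp rcm) as [|Hle]; [assumption | exfalso].
  destruct tangency_points_pos as [Hxp _].
  destruct tangency_brackets as [_ Hp]; destruct rcm_first as [[Hrcm Gcm] _].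
  (* the affine difference of the gaps is <= 0 at [alpha * xp], hence < 0 at [rcm] *)
  pose proof (tangent_gap_sub xp xm rcm (alpha * xp)) as D.
  pose proof (tangent_gap_min_at_tangency xp xm xp_range xm_range).
  assert ((f1 xp - f1 xm) * (rcm - alpha * xp) < 0) by nra.
  assert (Gp : tangent_gap xp rcm < 0) by lra.
  pose proof (tangent_gap_neg_between xp rcp rhp rcm ltac:(lra) ltac:(lra)
                rcp_first rhp_last Hrcm Gp).
  lra.
Qed.

Lemma rhp_lt_rhm : rhp < rhm.
Proof.
  destruct (Rlt_or_le rhp rhm) as [|Hle]; [assumption | exfalso].
  destruct tangency_points_pos as [_ Hxm].
  destruct tangency_brackets as [Hm _]; destruct rhp_last as [[Hrhp Ghp] _].
  pose proof (tangent_gap_sub xm xp rhp (alpha * xm)) as D.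
  pose proof (tangent_gap_min_at_tangency xm xp xm_range xp_range).
  assert ((f1 xm - f1 xp) * (rhp - alpha * xm) < 0) by nra.
  assert (Gm : tangent_gap xm rhp < 0) by lra.
  pose proof (tangent_gap_neg_between xm rcm rhm rhp ltac:(lra) slope_m_nonneg
                rcm_first rhm_last Hrhp Gm).
  lra.
Qed.

Lemma tangent_gap_xm_rcp_ge0 : 0 <= tangent_gap xm rcp.
Proof.
  destruct (Rle_or_lt 0 (tangent_gap xm rcp)) as [|Gm]; [assumption | exfalso].
  destruct tangency_points_pos as [_ Hxm]; destruct rcp_first as [[Hrcp _] _].
  pose proof (tangent_gap_neg_between xm rcm rhm rcp ltac:(lra) slope_m_nonneg
                rcm_first rhm_last Hrcp Gm).
  pose proof rcp_lt_rcm. lra.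
Qed.

Lemma slope_sub_ge : f1 xp - f1 xm >= beta / 2 * (rhm - rhp).
Proof.
  pose proof rcp_lt_rcm; pose proof rhp_lt_rhm.
  destruct rcp_first as [[Hrcp Gcp] _]; destruct rhp_last as [[Hrhp Ghp] _].
  destruct rhm_last as [[Hrhm Ghm] _].
  pose proof tangent_gap_xm_rcp_ge0.
  assert (Hsec : f1 xp * (rhp - rcp) = f rhp - f rcp).
  { unfold tangent_gap in Gcp, Ghp; lra. }
  pose proof (secant_excess L beta f f1 f2 f_der f1_der f2_le rcp rhp rhm (f1 xp)
                ltac:(lra) ltac:(lra) ltac:(lra) ltac:(lra) Hsec) as Hex.
  assert (Gp : f1 xp * (rhm - rhp) - (f rhm - f rhp) = tangent_gap xp rhm).
  { unfold tangent_gap in *; lra. }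
  pose proof (tangent_gap_sub xp xm rhm rcp) as D.
  apply Rle_ge, (Rmult_le_reg_r (rhm - rcp)); nra.
Qed.

Theorem tangent_zeros_interlace :
  (rcp < rcm /\ rcm < rhp /\ rhp < rhm) /\ f1 xp - f1 xm >= beta / 2 * (rhm - rhp).
Proof.
  split; [split; [|split] | ]; auto using rcp_lt_rcm, rhp_lt_rhm, slope_sub_ge.
Qed.

End TwoTangents.

Lemma falpha_derivable x : 0 <= x <= L -> derivable_pt_lim (falpha alpha f) (alpha * x) (f1 x).
Proof.
  intro Hx.
  change (falpha alpha f) with (mult_real_fct alpha (comp f (id * fct_cte (/ alpha))))%F.
  eapply derivable_pt_lim_eq.
  - apply derivable_pt_lim_scal, derivable_pt_lim_comp.
    + apply derivable_pt_lim_mult; [apply derivable_pt_lim_id | apply derivable_pt_lim_const].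
    + unfold mult_fct, id, fct_cte.
      replace (alpha * x * / alpha) with x by (field; lra).
      apply f_der, Hx.
  - unfold fct_cte, id; field; lra.
Qed.

Lemma is_rtilde_tangency u rt : is_rtilde L alpha f u rt ->
  exists x, 0 <= x <= L /\ rt = alpha * x /\ u = f1 x.
Proof.
  intros [Hrt Hder].
  exists (rt / alpha).
  assert (E : rt = alpha * (rt / alpha)) by (field; lra).
  assert (Hx : 0 <= rt / alpha <= L).
  { split; [apply Rmult_le_pos; [lra | left; apply Rinv_0_lt_compat; lra]|].
    apply Rmult_le_reg_l with alpha; lra. }
  split; [exact Hx | split; [exact E |]].
  rewrite E in Hder.
  exact (uniqueness_limite _ _ _ _ Hder (falpha_derivable _ Hx)).
Qed.

Lemma in_I_tangent_gap x r :
  in_I L alpha f (f1 x) (alpha * x) r <-> 0 <= r <= L /\ tangent_gap x r = 0.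
Proof.
  assert (E : phi alpha f (f1 x) (alpha * x) r - f r = tangent_gap x r).
  { unfold phi, falpha, tangent_gap.
    replace (alpha * x / alpha) with x by (field; lra). ring. }
  unfold in_I; split; intros [Hr Hz]; split; auto; lra.
Qed.

Lemma is_min_I_first_zero x r :
  is_min_I L alpha f (f1 x) (alpha * x) r -> first_zero L (tangent_gap x) r.
Proof.
  intros [Hr Hmin]. split; [now apply in_I_tangent_gap|].
  intros z Hz Gz. apply Hmin, in_I_tangent_gap; auto.
Qed.

Lemma is_max_I_last_zero x r :
  is_max_I L alpha f (f1 x) (alpha * x) r -> last_zero L (tangent_gap x) r.
Proof.
  intros [Hr Hmax]. split; [now apply in_I_tangent_gap|].
  intros z Hz Gz. apply Hmax, in_I_tangent_gap; auto.
Qed.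

End TangentGap.

Theorem mainTheorem5
  (L B beta V : R) (f f1 f2 v v1 v2 : R -> R)
  (alpha um up rtm rtp rcm rhm rcp rhp : R) :
  hypF L B beta f f1 f2 v v1 v2 ->
  is_max_on L v V ->
  0 < alpha < 1 ->
  0 <= um -> um < up -> up <= V ->
  is_rtilde L alpha f um rtm ->
  is_rtilde L alpha f up rtp ->
  is_min_I L alpha f um rtm rcm ->
  is_max_I L alpha f um rtm rhm ->
  is_min_I L alpha f up rtp rcp ->
  is_max_I L alpha f up rtp rhp ->
  rhp > rcm ->
  (rcp < rcm /\ rcm < rhp /\ rhp < rhm) /\
  up - um >= beta / 2 * (rhm - rhp).
Proof.
  intros HF _ Halpha Hum Hlt _ Hrtm Hrtp Hcm Hhm Hcp Hhp Hover.
  destruct HF as (_ & f_der & f1_der & _ & _ & _ & _ & f_nonneg & _ & _ & f_0 & f_L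
                  & [beta_pos _] & f2_bounds & _).
  assert (f2_le : forall x, 0 <= x <= L -> f2 x <= - beta)
    by (intros x Hx; apply f2_bounds in Hx; lra).
  destruct (is_rtilde_tangency L alpha f f1 f_der Halpha um rtm Hrtm) as (xm & Hxm & -> & ->).
  destruct (is_rtilde_tangency L alpha f f1 f_der Halpha up rtp Hrtp) as (xp & Hxp & -> & ->).
  eapply tangent_zeros_interlace; eauto using is_min_I_first_zero, is_max_I_last_zero.
Qed.
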